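(* Let $n\ge4$, let $\textnormal{Reg}(\mathcal{OCT}_n)$ be the set of regular elements of $\mathcal{OCT}_n$ and $L(n,n-1)=\{\alpha\in\textnormal{Reg}(\mathcal{OCT}_n):|\textnormal{Im}\,\alpha|\le n-1\}$. Then the rank of the semigroup $L(n,n-1)$ is $2$.
   Context: $\mathcal{T}_n$ is the full transformation semigroup on $[n]=\{1,\dots,n\}$ under composition. $\alpha$ is a contraction if $|x\alpha-y\alpha|\le|x-y|$ for all $x,y$, order-preserving if $x\le y\Rightarrow x\alpha\le y\alpha$. $\mathcal{OCT}_n$ is the semigroup of order-preserving contractions; $\alpha\in\mathcal{OCT}_n$ is regular if $\alpha\beta\alpha=\alpha$ for some $\beta\in\mathcal{OCT}_n$. The rank of a semigroup is the minimum cardinality of a generating set. *)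

From mathcomp Require Import all_boot.
Set Implicit Arguments. Unset Strict Implicit. Unset Printing Implicit Defensive.

(* Full transformations of [n] = {1..n}, modelled on 'I_n = {0..n-1}
   (a shift by one preserves order and distances). *)
Definition trans (n : nat) := {ffun 'I_n -> 'I_n}.

(* Composition with maps acting on the right: x (a b) = (x a) b. *)
Definition tcomp n (a b : trans n) : trans n := [ffun x => b (a x)].

Definition distn (x y : nat) : nat := (x - y) + (y - x).

Definition order_preserving n (a : trans n) : bool :=
  [forall x : 'I_n, forall y : 'I_n, (x <= y) ==> (a x <= a y)].

Definition contraction n (a : trans n) : bool :=
  [forall x : 'I_n, forall y : 'I_n, distn (a x) (a y) <= distn x y].

Definition OCT n : {set trans n} :=
  [set a | order_preserving a && contraction a].

Definition regular_OCT n (a : trans n) : bool :=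
  [exists b in OCT n, tcomp (tcomp a b) a == a].

Definition RegOCT n : {set trans n} := [set a in OCT n | regular_OCT a].

Definition im n (a : trans n) : {set 'I_n} := [set a x | x in 'I_n].

Definition L n (r : nat) : {set trans n} := [set a in RegOCT n | #|im a| <= r].

Definition word_prod n (x : trans n) (s : seq (trans n)) : trans n :=
  foldl (@tcomp n) x s.

Definition in_generated n (A : {set trans n}) (f : trans n) : Prop :=
  exists (x : trans n) (s : seq (trans n)),
    x \in A /\ all (fun y => y \in A) s /\ f = word_prod x s.

Definition generates n (A S : {set trans n}) : Prop :=
  forall f, f \in S <-> in_generated A f.

Definition has_rank n (S : {set trans n}) (r : nat) : Prop :=
  (exists A : {set trans n}, generates A S /\ #|A| = r) /\
  (forall A : {set trans n}, generates A S -> r <= #|A|).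

From mathcomp Require Import all_boot.
From mathcomp Require Import zify.

Set Implicit Arguments.
Unset Strict Implicit.
Unset Printing Implicit Defensive.

(* A regular order-preserving contraction is a ramp x |-> a + min(x - k, w):
   constant, then climbing with slope one for w steps, then constant again.
   Indeed an order-preserving contraction moves by steps 0 or 1, so its image
   is an interval [a, a + w]; if f b f = f then b is a section of f on that
   interval, and b, a contraction with distinct consecutive values there,
   climbs with slope one, which pins f down.  Ramps with w < n - 1 are closed
   under right multiplication by the clamped shifts up and down, which are
   such ramps themselves, and the ramp (k, a, w) is the word
   down^k up^(n-1-w) down^(n-1-w-a).  Since up and down do not commute, no
   single element generates L(n, n-1). *)

Section Generation.
Variable n : nat.
Implicit Types (A S : {set trans n}) (f g h : trans n).

Lemma tcompE f g x : tcomp f g x = g (f x).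
Proof. exact: ffunE. Qed.

Lemma in_generated_ind A (P : trans n -> Prop) f : in_generated A f ->
  (forall g, g \in A -> P g) ->
  (forall f g, P f -> g \in A -> P (tcomp f g)) -> P f.
Proof.
move=> [x [s [xA [sA ->]]]] PA PM; have Px := PA x xA; clear xA.
elim: s x Px sA => [|y s IH] x Px //= /andP [yA sA].
exact: IH (PM _ _ Px yA) sA.
Qed.

Definition ract (z : 'I_n) g : 'I_n := g z.

Lemma in_generated_word A w : w != [::] -> all (fun y => y \in A) w ->
  in_generated A [ffun z => foldl ract z w].
Proof.
case: w => [//|x s] _ /andP [xA sA]; exists x, s; split => //; split => //.
apply/ffunP => z; rewrite ffunE /=.
by elim: s x {xA sA} => [|y s IH] x //=; rewrite -IH /ract tcompE.
Qed.

Lemma in_generated1 g f : in_generated [set g] f ->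
  exists j, forall z, f z = iter j.+1 g z.
Proof.
pose P (f : trans n) := exists j, forall z, f z = iter j.+1 g z.
move/(@in_generated_ind _ P); apply => [_ /set1P -> | {}f _ [j Ef] /set1P ->].
  by exists 0.
by exists j.+1 => z; rewrite tcompE Ef.
Qed.

Lemma generates_card_gt1 A S f h : generates A S -> f \in S -> h \in S ->
  tcomp f h != tcomp h f -> 1 < #|A|.
Proof.
move=> genA fS hS; apply: contraR; rewrite -leqNgt => A_le1.
have [x [_ [xA _]]] := (genA f).1 fS.
have /cards1P [g defA] : #|A| == 1.
  by rewrite eqn_leq A_le1 card_gt0; apply/set0Pn; exists x.
move/genA: fS hS; rewrite defA => /in_generated1 [i Ef] /genA.
rewrite defA => /in_generated1 [j Eh].
by apply/eqP/ffunP => z; rewrite !tcompE !Ef !Eh -!iterD addnC.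
Qed.

End Generation.

Section Ramps.
Variable m : nat.
Local Notation n := m.+1.
Hypothesis m_gt0 : 0 < m.

Definition ramp (k a w x : nat) : nat := a + minn (x - k) w.

(* The image of a ramp has [w.+1] points, so [is_ramp r f] forces [#|im f| <= r]. *)
Definition is_ramp (r : nat) (f : trans n) : Prop :=
  exists k a w, [/\ w < r, k + w < n, a + w < n &
    forall x : 'I_n, f x = ramp k a w x :> nat].

Lemma ramp_OCT r f : is_ramp r f -> f \in OCT n.
Proof.
case=> k [a [w [_ _ _ E]]].
rewrite inE; apply/andP; split; apply/forallP=> x; apply/forallP=> y.
  by apply/implyP; rewrite !E /ramp; lia.
by rewrite /distn !E /ramp; lia.
Qed.

Lemma ramp_regular r f : is_ramp r f -> regular_OCT f.
Proof.
case=> k [a [w [_ kw aw E]]].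
pose b : trans n := [ffun y : 'I_n => inord (ramp a k w y)].
have Eb y : b y = ramp a k w y :> nat by rewrite ffunE inordK /ramp //; lia.
have b_ramp : is_ramp n b by exists a, k, w; split => //; lia.
apply/existsP; exists b; rewrite (ramp_OCT b_ramp) /=.
apply/eqP/ffunP => x; apply/val_inj => /=.
by rewrite !tcompE E Eb !E /ramp; lia.
Qed.

Lemma card_im_ramp r f : is_ramp r f -> #|im f| <= r.
Proof.
case=> k [a [w [wr _ aw E]]].
pose g (j : 'I_w.+1) : 'I_n := inord (a + j).
have im_sub : im f \subset [set g j | j : 'I_w.+1].
  apply/subsetP => _ /imsetP [x _ ->]; apply/imsetP.
  have jw : minn (x - k) w < w.+1 by lia.
  exists (Ordinal jw) => //; apply/val_inj => /=.
  by rewrite inordK /=; [rewrite E | lia].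
apply: leq_trans (subset_leq_card im_sub) _.
by apply: leq_trans (leq_imset_card _ _) _; rewrite card_ord.
Qed.

Lemma ramp_L f : is_ramp m f -> f \in L n m.
Proof.
move=> rf; rewrite inE (card_im_ramp rf) andbT inE (ramp_OCT rf).
exact: ramp_regular rf.
Qed.

Section RegularPair.
Variables F B : nat -> nat.
Hypothesis F_mono : forall x y, x <= y -> y < n -> F x <= F y.
Hypothesis F_contr : forall x y, x < n -> y < n -> distn (F x) (F y) <= distn x y.
Hypothesis F_lt : forall x, x < n -> F x < n.
Hypothesis B_mono : forall x y, x <= y -> y < n -> B x <= B y.
Hypothesis B_contr : forall x y, x < n -> y < n -> distn (B x) (B y) <= distn x y.
Hypothesis B_lt : forall x, x < n -> B x < n.
Hypothesis FBF : forall x, x < n -> F (B (F x)) = F x.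

Lemma F_step x : x < m -> F x <= F x.+1 <= (F x).+1.
Proof.
move=> xm; have x1n : x.+1 < n by [].
have := F_contr (ltnW x1n) x1n; have := F_mono (leqnSn x) x1n.
rewrite /distn; lia.
Qed.

Lemma F_onto y : F 0 <= y <= F m -> exists2 x, x < n & F x = y.
Proof.
suff onto j : j < n -> F 0 <= y <= F j -> exists2 x, x < n & F x = y.
  exact: onto.
elim: j => [|j IH] jn /andP [y_ge y_le]; first by exists 0 => //; lia.
have [y_le_Fj | y_gt_Fj] := leqP y (F j); first by apply: IH; lia.
by exists j.+1 => //; have := F_step jn; lia.
Qed.

Lemma FB_id y : F 0 <= y <= F m -> F (B y) = y.
Proof. by case/F_onto => x xn <-; apply: FBF. Qed.

Lemma B_succ y : F 0 <= y < F m -> B y.+1 = (B y).+1.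
Proof.
move=> y_range; have yn : y.+1 < n by have := F_lt (ltnSn m); lia.
have FBy : F (B y) = y by apply: FB_id; lia.
have FBy1 : F (B y.+1) = y.+1 by apply: FB_id; lia.
have B_neq : B y.+1 != B y by apply/eqP => E; move: FBy1; rewrite E FBy; lia.
have := B_contr (ltnW yn) yn; have := B_mono (leqnSn y) yn.
by move: B_neq; rewrite /distn; lia.
Qed.

Lemma B_shift j : j <= F m - F 0 -> B (F 0 + j) = B (F 0) + j.
Proof. by elim: j => [|j IH] j_le; rewrite ?addn0 // addnS B_succ ?IH; lia. Qed.

Lemma F_is_ramp : exists k a w,
  [/\ k + w < n, a + w < n & forall x, x < n -> F x = ramp k a w x].
Proof.
set a := F 0; set w := F m - a; set k := B a.
have a_le_t : a <= F m := F_mono (leq0n m) (ltnSn m).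
have F_shift j : j <= w -> F (k + j) = a + j.
  by move=> jw; rewrite -B_shift // FB_id; lia.
have kwn : k + w < n by rewrite -B_shift // B_lt //; have := F_lt (ltnSn m); lia.
exists k, a, w; split => // [|x xn]; first by have := F_lt (ltnSn m); lia.
rewrite /ramp; have [x_le_k | k_lt_x] := leqP x k.
  have kn : k < n by apply: leq_ltn_trans (leq_addr w k) kwn.
  have := F_mono (leq0n x) xn; have := F_mono x_le_k kn.
  by rewrite -[k]addn0 F_shift //; lia.
have [kw_le_x | x_lt_kw] := leqP (k + w) x.
  have := F_mono (xn : x <= m) (ltnSn m); have := F_mono kw_le_x xn.
  by rewrite F_shift //; lia.
by have := F_shift (x - k); rewrite subnKC; lia.
Qed.

End RegularPair.

Definition nat_fun (f : trans n) (x : nat) : nat := f (inord x).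

Lemma OCT_nat_fun f : f \in OCT n ->
  (forall x y, x <= y -> y < n -> nat_fun f x <= nat_fun f y) /\
  (forall x y, x < n -> y < n -> distn (nat_fun f x) (nat_fun f y) <= distn x y).
Proof.
rewrite inE => /andP [/forallP f_mono /forallP f_contr]; split.
  move=> x y xy yn; have /forallP/(_ (inord y))/implyP := f_mono (inord x).
  by apply; rewrite !inordK //; lia.
move=> x y xn yn; have /forallP/(_ (inord y)) := f_contr (inord x).
by rewrite !inordK.
Qed.

Lemma regular_ramp f : f \in RegOCT n -> is_ramp n f.
Proof.
rewrite inE => /andP [fO /existsP [b /andP [bO /eqP fbf]]].
have [F_mono F_contr] := OCT_nat_fun fO; have [B_mono B_contr] := OCT_nat_fun bO.
have F_lt x (_ : x < n) : nat_fun f x < n by exact: ltn_ord.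
have B_lt x (_ : x < n) : nat_fun b x < n by exact: ltn_ord.
have FBF x (_ : x < n) : nat_fun f (nat_fun b (nat_fun f x)) = nat_fun f x.
  have := congr1 (fun g : trans n => g (inord x) : nat) fbf.
  by rewrite /nat_fun !inord_val !tcompE.
have [k [a [w [kw aw E]]]] := F_is_ramp F_mono F_contr F_lt B_mono B_contr B_lt FBF.
exists k, a, w; split => // [|x]; first lia.
by rewrite -E // /nat_fun inord_val.
Qed.

Lemma L_ramp f : f \in L n m -> is_ramp m f.
Proof.
rewrite inE => /andP [/regular_ramp [k [a [w [wn kw aw E]]]] card_im_le].
exists k, a, w; split => //.
rewrite ltn_neqAle -ltnS wn andbT; apply: contraTneq card_im_le => w_eq_m.
have f_id x : f x = x by apply/val_inj => /=; rewrite E /ramp; have := ltn_ord x; lia.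
have -> : im f = setT by apply/setP => y; rewrite inE; apply/imsetP; exists y.
by rewrite cardsT card_ord ltnn.
Qed.

Definition up : trans n := [ffun x : 'I_n => inord (minn x.+1 m)].
Definition down : trans n := [ffun x : 'I_n => inord x.-1].

Lemma upE x : up x = minn x.+1 m :> nat.
Proof. by rewrite ffunE inordK //; lia. Qed.

Lemma downE x : down x = x.-1 :> nat.
Proof. by rewrite ffunE inordK //; have := ltn_ord x; lia. Qed.

Lemma up_down_noncomm : tcomp up down != tcomp down up.
Proof.
apply/eqP => /(congr1 (fun g : trans n => g ord0 : nat)).
by rewrite !tcompE downE upE upE downE /=; lia.
Qed.

Lemma ramp_up : is_ramp m up.
Proof. by exists 0, 1, m.-1; split; try lia; move=> x; rewrite upE /ramp; lia. Qed.

Lemma ramp_down : is_ramp m down.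
Proof.
exists 1, 0, m.-1; split; try lia.
by move=> x; rewrite downE /ramp; have := ltn_ord x; lia.
Qed.

Lemma ramp_tcomp_down r f : is_ramp r f -> is_ramp r (tcomp f down).
Proof.
case=> k [a [w [wr kw aw E]]].
have Ed x : tcomp f down x = (f x).-1 :> nat by rewrite tcompE downE.
have [a0 | a_gt0] := posnP a; last first.
  by exists k, a.-1, w; split; try lia; move=> x; rewrite Ed E /ramp; lia.
have [w0 | w_gt0] := posnP w.
  by exists k, 0, 0; split; try lia; move=> x; rewrite Ed E /ramp; lia.
by exists k.+1, 0, w.-1; split; try lia; move=> x; rewrite Ed E /ramp; lia.
Qed.

Lemma ramp_tcomp_up r f : is_ramp r f -> is_ramp r (tcomp f up).
Proof.
case=> k [a [w [wr kw aw E]]].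
have Eu x : tcomp f up x = minn (f x).+1 m :> nat by rewrite tcompE upE.
have [aw_lt | aw_eq] := ltnP (a + w) m.
  by exists k, a.+1, w; split; try lia; move=> x; rewrite Eu E /ramp; lia.
have [w0 | w_gt0] := posnP w.
  by exists k, m, 0; split; try lia; move=> x; rewrite Eu E /ramp; lia.
by exists k, a.+1, w.-1; split; try lia; move=> x; rewrite Eu E /ramp; lia.
Qed.

Lemma generated_ramp f : in_generated [set up; down] f -> is_ramp m f.
Proof.
move/(@in_generated_ind _ _ (is_ramp m)); apply => [g | g y rg] /set2P [] ->.
- exact: ramp_up.
- exact: ramp_down.
- exact: ramp_tcomp_up.
- exact: ramp_tcomp_down.
Qed.

Lemma foldl_down j (z : 'I_n) : foldl (@ract n) z (nseq j down) = z - j :> nat.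
Proof. by elim: j z => [|j IH] z /=; rewrite ?subn0 // IH /ract downE; lia. Qed.

Lemma foldl_up j (z : 'I_n) : foldl (@ract n) z (nseq j up) = minn (z + j) m :> nat.
Proof.
elim: j z => [|j IH] z /=; last by rewrite IH /ract upE; lia.
by rewrite addn0; have := ltn_ord z; lia.
Qed.

Lemma ramp_generated f : is_ramp m f -> in_generated [set up; down] f.
Proof.
case=> k [a [w [wm kw aw E]]].
set word := nseq k down ++ nseq (m - w) up ++ nseq (m - w - a) down.
have -> : f = [ffun z => foldl (@ract n) z word].
  apply/ffunP => z; apply/val_inj => /=; rewrite ffunE /word !foldl_cat.
  by rewrite foldl_down foldl_up foldl_down E /ramp; have := ltn_ord z; lia.
apply: in_generated_word; rewrite /word.
  by rewrite -size_eq0 !size_cat !size_nseq; lia.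
by rewrite !all_cat !all_nseq !inE !eqxx !orbT.
Qed.

Lemma generates_up_down : generates [set up; down] (L n m).
Proof. by move=> f; split => [/L_ramp/ramp_generated | /generated_ramp/ramp_L]. Qed.

End Ramps.

Theorem corollary12 (n : nat) (hn : 4 <= n) : has_rank (L n (n - 1)) 2.
Proof.
case: n hn => [//|m] hn; rewrite subn1 /=.
have m_gt0 : 0 < m by lia.
split=> [|A genA].
  exists [set up m; down m]; split; first exact: generates_up_down.
  rewrite cards2; case: eqP => // up_eq_down.
  by move: (up_down_noncomm m_gt0); rewrite up_eq_down eqxx.
apply: generates_card_gt1 genA _ _ (up_down_noncomm m_gt0).
  exact: ramp_L (ramp_up m_gt0).
exact: ramp_L (ramp_down m_gt0).
Qed.
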